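(* Let $\mathbb{K}=(G_{\mathbb{K}},M_{\mathbb{K}},I_{\mathbb{K}})$ and $\mathbb{S}=(G_{\mathbb{S}},M_{\mathbb{S}},I_{\mathbb{S}})$ be formal contexts and $\sigma\colon G_{\mathbb{K}}\to G_{\mathbb{S}}$ a map. Then there exist a formal context $\mathbb{T}=(G_{\mathbb{T}},M_{\mathbb{T}},I_{\mathbb{T}})$ and a map $\psi\colon G_{\mathbb{K}}\to G_{\mathbb{T}}$ such that $\psi$ is a $\mathbb{T}$-measure of $\mathbb{K}$ and $\{\psi^{-1}(A)\mid A\in \mathrm{Ext}(\mathbb{T})\}=\{\sigma^{-1}(A)\mid A\in\mathrm{Ext}(\mathbb{S})\}\cap \mathrm{Ext}(\mathbb{K})$.
   Context: A formal context is a triple $(G,M,I)$ with $G$ a non-empty finite set (objects), $M$ a finite set (attributes) and $I\subseteq G\times M$. For $A\subseteq G$ let $A'=\{m\in M\mid \forall a\in A: (a,m)\in I\}$ and for $B\subseteq M$ let $B'=\{g\in G\mid \forall b\in B:(g,b)\in I\}$. An extent of $(G,M,I)$ is a set $A\subseteq G$ with $A''=A$; $\mathrm{Ext}(G,M,I)$ denotes the set of all extents. For a map $\sigma$, $\sigma^{-1}(A)$ denotes the preimage of $A$. For formal contexts $\mathbb{K}=(G,M,I)$ and $\mathbb{T}=(G_{\mathbb{T}},M_{\mathbb{T}},I_{\mathbb{T}})$, a map $\psi\colon G\to G_{\mathbb{T}}$ is a $\mathbb{T}$-measure of $\mathbb{K}$ iff for every $A\in\mathrm{Ext}(\mathbb{T})$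 the preimage $\psi^{-1}(A)$ is in $\mathrm{Ext}(\mathbb{K})$. *)

From mathcomp Require Import all_boot.
Set Implicit Arguments. Unset Strict Implicit. Unset Printing Implicit Defensive.

(* A formal context (G, M, I): G, M finite types, I : G -> M -> bool.
   Non-emptiness of G is stated as a separate hypothesis where needed. *)

Definition intent {G M : finType} (I : G -> M -> bool) (A : {set G}) : {set M} :=
  [set m | [forall a in A, I a m]].

Definition extent_of {G M : finType} (I : G -> M -> bool) (B : {set M}) : {set G} :=
  [set g | [forall b in B, I g b]].

Definition is_extent {G M : finType} (I : G -> M -> bool) (A : {set G}) : bool :=
  extent_of I (intent I A) == A.

Definition Ext {G M : finType} (I : G -> M -> bool) : {set {set G}} :=
  [set A : {set G} | is_extent I A].

Definition is_measure {GK MK GT MT : finType}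
  (IK : GK -> MK -> bool) (IT : GT -> MT -> bool) (psi : GK -> GT) : Prop :=
  forall A : {set GT}, A \in Ext IT -> psi @^-1: A \in Ext IK.

(** The extents of a context are closed under intersections, and conversely
    every intersection-closed family F of subsets of G is the extent system of
    the context (G, F, ∈).  The σ-preimages of extents of S are exactly the
    extents of the pulled-back context (G_K, M_S, I_S ∘ σ), so the target
    family is an intersection of two extent systems, hence intersection-closed,
    hence the extent system of a context T on G_K; ψ := id then works. *)
From mathcomp Require Import all_boot.

Set Implicit Arguments.
Unset Strict Implicit.
Unset Printing Implicit Defensive.

Definition cap_closed (T : finType) (F : {set {set T}}) :=
  forall S : {set {set T}}, S \subset F -> \bigcap_(B in S) B \in F.

Lemma cap_closedI (T : finType) (F1 F2 : {set {set T}}) :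
  cap_closed F1 -> cap_closed F2 -> cap_closed (F1 :&: F2).
Proof.
move=> F1_closed F2_closed S /subsetIP[sSF1 sSF2].
by rewrite inE F1_closed ?F2_closed.
Qed.

Section GaloisConnection.
Variables (G M : finType) (I : G -> M -> bool).

Lemma sub_extent_intent (A : {set G}) : A \subset extent_of I (intent I A).
Proof.
apply/subsetP => a aA; rewrite inE; apply/forall_inP => m.
by rewrite inE => /forall_inP; apply.
Qed.

Lemma sub_intent_extent (B : {set M}) : B \subset intent I (extent_of I B).
Proof.
apply/subsetP => m mB; rewrite inE; apply/forall_inP => g.
by rewrite inE => /forall_inP; apply.
Qed.

Lemma intentS (A1 A2 : {set G}) :
  A1 \subset A2 -> intent I A2 \subset intent I A1.
Proof.
move=> /subsetP sA12; apply/subsetP => m; rewrite !inE => /forall_inP IA2m.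
by apply/forall_inP => a /sA12; apply: IA2m.
Qed.

Lemma extentS (B1 B2 : {set M}) :
  B1 \subset B2 -> extent_of I B2 \subset extent_of I B1.
Proof.
move=> /subsetP sB12; apply/subsetP => g; rewrite !inE => /forall_inP IgB2.
by apply/forall_inP => m /sB12; apply: IgB2.
Qed.

Lemma is_extentE (A : {set G}) :
  is_extent I A = (extent_of I (intent I A) \subset A).
Proof. by rewrite /is_extent eqEsubset sub_extent_intent andbT. Qed.

Lemma is_extent_extent (B : {set M}) : is_extent I (extent_of I B).
Proof. by rewrite is_extentE extentS ?sub_intent_extent. Qed.

Lemma Ext_cap_closed : cap_closed (Ext I).
Proof.
move=> S sSExt; rewrite inE is_extentE; apply/bigcapsP => B BS.
have /eqP B_extent : is_extent I B by rewrite -inE (subsetP sSExt).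
by rewrite -B_extent extentS ?intentS ?bigcap_inf.
Qed.

End GaloisConnection.

Lemma preimset_Ext (G H M : finType) (I : H -> M -> bool) (f : G -> H) :
  [set f @^-1: A | A : {set H} in Ext I] = Ext (I \o f).
Proof.
have preim_extent B : f @^-1: extent_of I B = extent_of (I \o f) B.
  by apply/setP => g; rewrite !inE.
apply/setP => X; rewrite [RHS]inE; apply/imsetP/idP.
- move=> [A]; rewrite inE => /eqP <- ->.
  by rewrite preim_extent is_extent_extent.
- move=> /eqP X_extent; exists (extent_of I (intent (I \o f) X)).
    by rewrite inE is_extent_extent.
  by rewrite preim_extent X_extent.
Qed.

Section ClosureContext.
Variables (G : finType) (F : {set {set G}}).

(* The attributes are the members of F; a subset of G outside F is an
   attribute shared by every object, so it does not affect the extents. *)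
Definition closure_context (g : G) (B : {set G}) : bool := (B \in F) ==> (g \in B).

Lemma in_intent_closure_context (X B : {set G}) :
  (B \in intent closure_context X) = (B \in F) ==> (X \subset B).
Proof.
rewrite inE; apply/forall_inP/implyP => [X_B BF | X_B a aX].
  by apply/subsetP => a /X_B; rewrite /closure_context BF.
by apply/implyP => BF; apply: (subsetP (X_B BF)).
Qed.

Lemma extent_intent_closure_context (X : {set G}) :
  extent_of closure_context (intent closure_context X)
  = \bigcap_(B in [set B in F | X \subset B]) B.
Proof.
apply/setP => g; rewrite inE; apply/forall_inP/bigcapP => [g_hull B | g_hull B].
  rewrite inE => /andP[BF sXB]; have := g_hull B.
  by rewrite in_intent_closure_context /closure_context BF sXB => /(_ isT).
rewrite in_intent_closure_context /closure_context => /implyP sXB.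
by apply/implyP => BF; apply: g_hull; rewrite inE BF sXB.
Qed.

Lemma Ext_closure_context : cap_closed F -> Ext closure_context = F.
Proof.
move=> F_closed; apply/setP => X; rewrite inE is_extentE.
rewrite extent_intent_closure_context; apply/idP/idP => [sub_hullX | XF].
  set hull := \bigcap_(B in [set B in F | X \subset B]) B.
  have hullF : hull \in F.
    by apply: F_closed; apply/subsetP => B; rewrite inE => /andP[].
  suff -> : X = hull by [].
  apply/eqP; rewrite eqEsubset sub_hullX andbT.
  by apply/bigcapsP => B; rewrite inE => /andP[].
by apply: bigcap_inf; rewrite inE XF subxx.
Qed.

End ClosureContext.

Lemma preimset_id (T : finType) (A : {set T}) : id @^-1: A = A.
Proof. by apply/setP => x; rewrite inE. Qed.

Theorem corollary1 (GK MK GS MS : finType)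
  (IK : GK -> MK -> bool) (IS : GS -> MS -> bool) (sigma : GK -> GS) :
  0 < #|GK| -> 0 < #|GS| ->
  exists (GT MT : finType) (IT : GT -> MT -> bool) (psi : GK -> GT),
    [/\ 0 < #|GT|, is_measure IK IT psi &
        [set psi @^-1: A | A : {set GT} in Ext IT] =
        [set sigma @^-1: A | A : {set GS} in Ext IS] :&: Ext IK].
Proof.
move=> GK_gt0 _.
set F := _ :&: Ext IK.
have F_closed : cap_closed F.
  by rewrite /F preimset_Ext; apply: cap_closedI; apply: Ext_cap_closed.
exists GK, {set GK}, (closure_context F), id.
have ->: [set id @^-1: A | A : {set GK} in Ext (closure_context F)] = F.
  by rewrite (eq_imset _ (@preimset_id _)) imset_id Ext_closure_context.
by split=> // A; rewrite preimset_id Ext_closure_context // => /setIP[].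
Qed.
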